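(* Let $n \ge 0$ and let $A_n$ be the $n$th Laver table. For $k \ge 1$ let $C_k(A_n)$ be the free $\mathbb{Z}$-module with basis $A_n^k$, let $C_0(A_n) = \mathbb{Z}$ (its basis element $1$ identified with the empty tuple), and for $k \ge 1$ let $\partial^*_k : C_k(A_n) \to C_{k-1}(A_n)$ be the $\mathbb{Z}$-linear map given on basis elements by $$\partial^*_k(x_1, \dots, x_k) = \sum_{i=1}^k (-1)^{i-1} (x_1, \dots, x_{i-1},\ x_i * x_{i+1}, \dots, x_i * x_k),$$ and let $\partial^*_0 = 0$. Then the chain complex $(C_k(A_n), \partial^*_k)_{k \ge 0}$ is acyclic: for every $k \ge 0$ one has $\ker \partial^*_k = \operatorname{im} \partial^*_{k+1}$, i.e.\ all its homology groups are trivial.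
   Context: For $N \ge 1$ there is a unique binary operation $*$ on $\{1, \dots, N\}$ such that, for all $p, q$, one has $p * 1 = p+1$ for $p < N$, $N * 1 = 1$, and $p * (q * 1) = (p * q) * (p * 1)$. For $N = 2^n$ this operation satisfies the left-selfdistributive law $x*(y*z) = (x*y)*(x*z)$; the structure $(\{1, \dots, 2^n\}, * )$ is called the $n$th Laver table and denoted $A_n$. *)

From mathcomp Require Import all_boot all_order all_algebra.
Set Implicit Arguments. Unset Strict Implicit. Unset Printing Implicit Defensive.
Import GRing.Theory.
Local Open Scope ring_scope.

(* Elements of A_n = {1,...,2^n} are encoded as ordinals i : 'I_(2^n),
   where i stands for the element (val i + 1). *)
Notation laver_carrier n := 'I_(2 ^ n)%N.

(* [is_laver_op n op]: op satisfies the defining laws of the n-th Laver table: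
   p * 1 = p + 1 (p < N), N * 1 = 1, and p * (q * 1) = (p * q) * (p * 1).
   In the encoding, "1" is the ordinal of value 0 and
   "x * 1" is the ordinal of value (val x + 1) mod 2^n. *)
Definition is_laver_op (n : nat) (op : laver_carrier n -> laver_carrier n -> laver_carrier n) :=
  (forall p q : laver_carrier n, val q = 0%N ->
     val (op p q) = ((val p).+1 %% 2 ^ n)%N) /\
  (forall p q r s : laver_carrier n,
     val r = ((val q).+1 %% 2 ^ n)%N -> val s = ((val p).+1 %% 2 ^ n)%N ->
     op p r = op (op p q) s).

(* The i-th face (0-based i) of a (k+1)-tuple:
   (x_0,...,x_{i-1}, x_i * x_{i+1}, ..., x_i * x_k). *)
Definition laver_face (T : finType) (op : T -> T -> T) (k : nat)
    (x : k.+1.-tuple T) (i : 'I_k.+1) : k.-tuple T :=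
  [tuple (if (j < i)%N then tnth x (widen_ord (leqnSn k) j)
          else op (tnth x i) (tnth x (lift ord0 j))) | j < k].

(* Chains of degree k: C_k = free Z-module on T^k, as finitely supported
   coefficient functions {ffun k.-tuple T -> int}; C_0 = Z (empty tuple). *)
Definition chains (T : finType) (k : nat) := {ffun k.-tuple T -> int}.

(* The boundary map d*_{k+1} : C_{k+1} -> C_k, extended Z-linearly:
   d*(x_1..x_{k+1}) = sum_i (-1)^(i-1) face_i(x) (1-based i). *)
Definition laver_bd (T : finType) (op : T -> T -> T) (k : nat)
    (c : chains T k.+1) : chains T k :=
  [ffun y => \sum_(x : k.+1.-tuple T)
               c x * \sum_(i < k.+1 | laver_face op x i == y) (-1) ^+ i].

From HB Require Import structures.
From mathcomp Require Import all_boot all_order all_algebra.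
Set Implicit Arguments. Unset Strict Implicit. Unset Printing Implicit Defensive.
Import GRing.Theory.
Local Open Scope ring_scope.

(* The homology vanishes because A_n has a left identity, its top element N, and
   is left self-distributive.  Writing (a, y) for the tuple with head a and
   a * y for the left translate of y, the boundary satisfies
   d(a, y) = a * y - (a, d y).  Self-distributivity makes d commute with left
   translations, so this recursion gives d d = 0 by induction on the degree;
   and for a left identity e it reads d(e, y) + (e, d y) = y, i.e. prefixing by
   e is a contracting homotopy.  For the Laver table, N * q = q follows by
   induction on q, and self-distributivity by the classical descending induction
   on p, which rests on p < p * q for p < N. *)

Section LaverTable.
Variable N : nat.
Hypothesis N_gt0 : (0 < N)%N.
Variable op : 'I_N -> 'I_N -> 'I_N.

Fact predN_lt : (N.-1 < N)%N. Proof. by rewrite ltn_predL. Qed.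

(* [one] and [top] encode the elements 1 and N of the table. *)
Let one : 'I_N := Ordinal N_gt0.
Let top : 'I_N := Ordinal predN_lt.
Hypothesis op_one : forall p, op p one = ordS p.
Hypothesis op_ordS : forall p q, op p (ordS q) = op (op p q) (ordS p).

Lemma ordS_top : ordS top = one.
Proof. by apply: val_inj; rewrite /= prednK ?modnn. Qed.

Lemma val_ordS (p : 'I_N) : (p < N.-1)%N -> val (ordS p) = p.+1.
Proof. by move=> ltp; rewrite /= modn_small // (leq_ltn_trans ltp predN_lt). Qed.

Lemma ord_topVlt (p : 'I_N) : p = top \/ (p < N.-1)%N.
Proof.
have : (p <= N.-1)%N by rewrite -ltnS prednK.
by rewrite leq_eqVlt => /orP[/eqP eqp|]; [left; apply: val_inj | right].
Qed.

Lemma ord_succ_ind (P : 'I_N -> Prop) :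
  P one -> (forall q, P q -> P (ordS q)) -> forall q, P q.
Proof.
move=> P1 PS q; have [v eqv] : {v | val q = v} by exists (val q).
elim: v q eqv => [|v IH] q eqv; first by have -> : q = one by apply: val_inj.
have ltv : (v < N)%N by apply: ltn_trans (ltn_ord q); rewrite -eqv.
have -> : q = ordS (Ordinal ltv) by apply: val_inj; rewrite /= modn_small -eqv ?ltn_ord.
exact/PS/IH.
Qed.

Lemma ord_down_ind (P : 'I_N -> Prop) :
  (forall p : 'I_N, (forall c : 'I_N, (p < c)%N -> P c) -> P p) -> forall p, P p.
Proof.
move=> IH p; have [d] : {d | (N - p <= d)%N} by exists (N - p)%N.
elim: d p => [|d IHd] p ltpd; first by move: ltpd; rewrite leqn0 subn_eq0 leqNgt ltn_ord.
apply: IH => c ltpc; apply: IHd; rewrite -ltnS.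
exact: leq_trans (ltn_sub2l (ltn_ord p) ltpc) ltpd.
Qed.

Lemma laver_top_op q : op top q = q.
Proof.
elim/ord_succ_ind: q => [|q IHq]; first by rewrite op_one ordS_top.
by rewrite op_ordS IHq ordS_top op_one.
Qed.

Lemma laver_op_gt (p : 'I_N) q : (p < N.-1)%N -> (p < op p q)%N.
Proof.
elim/ord_down_ind: p q => p IHp q ltp.
elim/ord_succ_ind: q => [|q IHq]; first by rewrite op_one val_ordS.
rewrite op_ordS; have [->|ltx] := ord_topVlt (op p q).
  by rewrite laver_top_op val_ordS.
exact: ltn_trans IHq (IHp _ IHq _ ltx).
Qed.

Lemma laver_op_top p : op p top = top.
Proof.
have [->|ltp] := ord_topVlt p; first exact: laver_top_op.
have [//|lty] := ord_topVlt (op p top).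
have := laver_op_gt (ordS p) lty; rewrite -op_ordS ordS_top op_one val_ordS //.
by rewrite ltnS leqNgt laver_op_gt.
Qed.

Lemma laver_self_distributive p a b : op p (op a b) = op (op p a) (op p b).
Proof.
elim/ord_down_ind: p a b => p IHp a b.
have [->|ltp] := ord_topVlt p; first by rewrite !laver_top_op.
elim/ord_down_ind: a b => a IHa b.
have [->|lta] := ord_topVlt a; first by rewrite laver_top_op laver_op_top laver_top_op.
elim/ord_succ_ind: b => [|b IHb]; first by rewrite !op_one op_ordS.
rewrite [op a _]op_ordS [op p (ordS b)]op_ordS (IHa _ (laver_op_gt _ lta)) IHb.
by rewrite [op p (ordS a)]op_ordS -IHp ?laver_op_gt.
Qed.

End LaverTable.

Section LinearExtension.
Variable T : finType.

Definition chain_delta k (x : k.-tuple T) : chains T k := [ffun z => (z == x)%:R].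

Definition linext k m (F : k.-tuple T -> chains T m) (c : chains T k) : chains T m :=
  \sum_x F x *~ c x.

Fact linext_is_zmod_morphism k m (F : k.-tuple T -> chains T m) :
  zmod_morphism (linext F).
Proof.
by move=> c1 c2; rewrite /linext -sumrB; apply: eq_bigr => x _; rewrite !ffunE mulrzBr.
Qed.

HB.instance Definition _ k m (F : k.-tuple T -> chains T m) :=
  GRing.isZmodMorphism.Build _ _ (linext F) (linext_is_zmod_morphism F).

Lemma linext_delta k m (F : k.-tuple T -> chains T m) x : linext F (chain_delta x) = F x.
Proof.
rewrite /linext (bigD1 x) //= ffunE eqxx mulr1z big1 ?addr0 // => y /negbTE neyx.
by rewrite ffunE neyx mulr0z.
Qed.

Lemma linext_chain_delta k (c : chains T k) : linext (@chain_delta k) c = c.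
Proof.
apply/ffunP => y; rewrite /linext sum_ffunE (bigD1 y) //= ffunMzE ffunE eqxx.
rewrite /= intz big1 ?addr0 // => x /negbTE nexy.
by rewrite ffunMzE ffunE eq_sym nexy mul0rz.
Qed.

Lemma eq_linext k m (F G : k.-tuple T -> chains T m) c :
  F =1 G -> linext F c = linext G c.
Proof. by move=> eqFG; apply: eq_bigr => x _; rewrite eqFG. Qed.

Lemma linext_comp k m l (F : k.-tuple T -> chains T m) (G : m.-tuple T -> chains T l) c :
  linext G (linext F c) = linext (fun x => linext G (F x)) c.
Proof. by rewrite [linext F c]/linext raddf_sum; apply: eq_bigr => x _; rewrite raddfMz. Qed.

Lemma linextBl k m (F G : k.-tuple T -> chains T m) c :
  linext (fun x => F x - G x) c = linext F c - linext G c.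
Proof. by rewrite /linext -sumrB; apply: eq_bigr => x _; rewrite mulrzBl. Qed.

End LinearExtension.

Section LaverComplex.
Variables (T : finType) (op : T -> T -> T).

Definition bd_tuple k (x : k.+1.-tuple T) : chains T k :=
  \sum_(i < k.+1) chain_delta (laver_face op x i) *~ (-1) ^+ i.

Lemma laver_bdE k (c : chains T k.+1) : laver_bd op c = linext (@bd_tuple k) c.
Proof.
apply/ffunP => y; rewrite /laver_bd /linext ffunE sum_ffunE; apply: eq_bigr => x _.
rewrite ffunMzE /bd_tuple sum_ffunE big_mkcond /= mulrC -mulrzz; congr (_ *~ _).
apply: eq_bigr => i _.
by rewrite ffunMzE !ffunE eq_sym; case: eqP => _; rewrite ?mulrzz ?mul1r ?mul0r.
Qed.

Definition cons_delta a k (z : k.-tuple T) : chains T k.+1 := chain_delta (cons_tuple a z).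
Definition lmul_delta a k (z : k.-tuple T) : chains T k := chain_delta (map_tuple (op a) z).

Lemma laver_face_cons0 k a (y : k.-tuple T) :
  laver_face op (cons_tuple a y) ord0 = map_tuple (op a) y.
Proof.
by apply: eq_from_tnth => j; rewrite tnth_mktuple tnth_map !(tnth_nth a).
Qed.

Lemma laver_face_cons_lift k a (y : k.+1.-tuple T) (i : 'I_k.+1) :
  laver_face op (cons_tuple a y) (lift ord0 i) = cons_tuple a (laver_face op y i).
Proof.
apply: eq_from_tnth => -[[|j] ltj]; rewrite tnth_mktuple !(tnth_nth a) //=.
rewrite (nth_map (Ordinal (ltj : (j < k)%N))) ?size_enum_ord // nth_enum_ord //= ltnS.
by case: ifP; rewrite !(tnth_nth a) /= nth_enum_ord.
Qed.

Lemma bd_tuple_cons0 a (y : 0.-tuple T) : bd_tuple (cons_tuple a y) = lmul_delta a y.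
Proof. by rewrite /bd_tuple big_ord1 laver_face_cons0 expr0 mulr1z. Qed.

Lemma bd_tuple_consS k a (y : k.+1.-tuple T) :
  bd_tuple (cons_tuple a y) = lmul_delta a y - linext (@cons_delta a k) (bd_tuple y).
Proof.
rewrite /bd_tuple big_ord_recl laver_face_cons0 expr0 mulr1z.
rewrite (raddf_sum (linext (@cons_delta a k))) -sumrN.
congr (_ + _); apply: eq_bigr => i _.
by rewrite raddfMz laver_face_cons_lift lift0 exprS mulN1r mulrNz /= linext_delta.
Qed.

Lemma linext_bd_cons0 a (c : chains T 0) :
  linext (@bd_tuple 0) (linext (@cons_delta a 0) c) = linext (@lmul_delta a 0) c.
Proof.
by rewrite linext_comp; apply: eq_linext => z; rewrite linext_delta bd_tuple_cons0.
Qed.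

Lemma linext_bd_consS k a (c : chains T k.+1) :
  linext (@bd_tuple k.+1) (linext (@cons_delta a k.+1) c) =
  linext (@lmul_delta a k.+1) c - linext (@cons_delta a k) (linext (@bd_tuple k) c).
Proof.
rewrite !linext_comp -linextBl; apply: eq_linext => z.
by rewrite linext_delta bd_tuple_consS.
Qed.

Section SelfDistributive.
Hypothesis opLD : forall x y z, op x (op y z) = op (op x y) (op x z).

Lemma laver_face_map k a (y : k.+1.-tuple T) (i : 'I_k.+1) :
  laver_face op (map_tuple (op a) y) i = map_tuple (op a) (laver_face op y i).
Proof.
apply: eq_from_tnth => j; rewrite [RHS]tnth_map !tnth_mktuple !tnth_map.
by case: ifP => // _; rewrite opLD.
Qed.

Lemma bd_tuple_map k a (y : k.+1.-tuple T) :
  bd_tuple (map_tuple (op a) y) = linext (@lmul_delta a k) (bd_tuple y).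
Proof.
rewrite /bd_tuple raddf_sum; apply: eq_bigr => i _.
by rewrite raddfMz /= linext_delta laver_face_map.
Qed.

Lemma bd_tupleK k (x : k.+2.-tuple T) : linext (@bd_tuple k) (bd_tuple x) = 0.
Proof.
elim: k x => [|k IHk] x; case/tupleP: x => a y.
  by rewrite bd_tuple_consS raddfB /= linext_delta bd_tuple_map linext_bd_cons0 subrr.
rewrite bd_tuple_consS raddfB /= linext_delta bd_tuple_map linext_bd_consS IHk.
by rewrite raddf0 subr0 subrr.
Qed.

Lemma laver_bdK k (c : chains T k.+2) : laver_bd op (laver_bd op c) = 0.
Proof.
by rewrite !laver_bdE linext_comp; apply: big1 => x _; rewrite bd_tupleK mul0rz.
Qed.

End SelfDistributive.

Section LeftIdentity.
Variable e : T.
Hypothesis ope : left_id e op.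

Lemma lmul_delta_id k (z : k.-tuple T) : lmul_delta e z = chain_delta z.
Proof. by congr chain_delta; apply: eq_from_tnth => j; rewrite tnth_map ope. Qed.

Lemma laver_bd_cons0 (c : chains T 0) : laver_bd op (linext (@cons_delta e 0) c) = c.
Proof.
rewrite laver_bdE linext_bd_cons0 -[RHS]linext_chain_delta.
by apply: eq_linext => z; rewrite lmul_delta_id.
Qed.

Lemma laver_bd_consS k (c : chains T k.+1) :
  laver_bd op (linext (@cons_delta e k.+1) c) = c - linext (@cons_delta e k) (laver_bd op c).
Proof.
rewrite !laver_bdE linext_bd_consS; congr (_ - _).
by rewrite -[RHS]linext_chain_delta; apply: eq_linext => z; rewrite lmul_delta_id.
Qed.

End LeftIdentity.

End LaverComplex.

Lemma laver_complex_acyclic (T : finType) (op : T -> T -> T) (e : T) :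
    (forall x y z, op x (op y z) = op (op x y) (op x z)) -> left_id e op ->
  (forall c : chains T 0, exists d : chains T 1, laver_bd op d = c) /\
  (forall (k : nat) (c : chains T k.+1),
     laver_bd op c = 0 <-> exists d : chains T k.+2, laver_bd op d = c).
Proof.
move=> opLD ope; split=> [c|k c].
  by exists (linext (@cons_delta T e 0) c); rewrite laver_bd_cons0.
split=> [bdc0|[d <-]]; last exact: laver_bdK.
by exists (linext (@cons_delta T e k.+1) c); rewrite laver_bd_consS // bdc0 raddf0 subr0.
Qed.

Theorem proposition1p12 (n : nat)
    (op : laver_carrier n -> laver_carrier n -> laver_carrier n)
    (Hop : is_laver_op op) :
  (forall c : chains (laver_carrier n) 0,
     exists d : chains (laver_carrier n) 1, laver_bd op d = c) /\
  (forall (k : nat) (c : chains (laver_carrier n) k.+1),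
     laver_bd op c = 0 <->
     exists d : chains (laver_carrier n) k.+2, laver_bd op d = c).
Proof.
have N_gt0 : (0 < 2 ^ n)%N by rewrite expn_gt0.
case: Hop => op_one op_succ.
have op_ordS p q : op p (ordS q) = op (op p q) (ordS p) by exact: op_succ.
have {op_one}op_one p : op p (Ordinal N_gt0) = ordS p by apply: val_inj; exact: op_one.
apply: (laver_complex_acyclic (e := Ordinal (predN_lt N_gt0))).
  exact: laver_self_distributive op_one op_ordS.
exact: laver_top_op op_one op_ordS.
Qed.
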